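(* Let $\mathcal F$ be a Hilbert space with norm-induced metric $d$, $(\phi_i)_{i\in\mathbb N}\subset\mathcal F$, $\pi:\mathbb N\to\mathbb N$ of at most polynomial growth, and $\Sigma^\pi_M=\{\sum_{i\in I}c_i\phi_i:I\subset\{1,\dots,\pi(M)\},|I|\le M,(c_i)\in\mathbb R^I\}$. For $\alpha,\beta>0$ let $$\mathcal A^\alpha(\mathcal F,\Sigma^\pi,\beta)=\{f\in\mathcal F:\|f\|\le\beta\ \text{and}\ \sup_{M\ge1}M^\alpha d(f,\Sigma^\pi_M)\le\beta\},$$ where $d(f,A)=\inf_{g\in A}d(f,g)$. Then $\gamma^*_e(\mathcal A^\alpha(\mathcal F,\Sigma^\pi,\beta))\ge\alpha$.
   Context: A finite $X\subset\mathcal C$ is an $\varepsilon$-covering of $\mathcal C$ if every point of $\mathcal C$ is within distance $\varepsilon$ of some point of $X$; $N(\mathcal C,d,\varepsilon)$ is the minimal size of such a covering ($+\infty$ if none), $H=\log_2N$, and the encoding speed is $\gamma^*_e(\mathcal C)=\sup\{\gamma>0:H(\mathcal C,d,\varepsilon)=O(\varepsilon^{-1/\gamma})\text{ as }\varepsilon\to0\}$ ($0$ if the set is empty). *)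

From HB Require Import structures.
From mathcomp Require Import all_boot all_order all_algebra.
From mathcomp Require Import finmap.
From mathcomp Require Import all_classical all_reals all_analysis.
Set Implicit Arguments. Unset Strict Implicit. Unset Printing Implicit Defensive.
Import Order.TTheory GRing.Theory Num.Theory.
Import numFieldNormedType.Exports.
Local Open Scope classical_set_scope.
Local Open Scope ring_scope.


(* A real Hilbert space: a complete normed space whose norm is induced by an
   inner product ip (symmetric, linear in the first argument, ||x||^2 = <x,x>). *)
Definition is_inner_product {R : realType} {V : normedModType R}
  (ip : V -> V -> R) : Prop :=
  [/\ forall x y, ip x y = ip y x,
      forall (a : R) x y z, ip (a *: x + y) z = a * ip x z + ip y z
    & forall x, `|x| ^+ 2 = ip x x].

Definition dist {R : realType} {V : normedModType R} (x y : V) : R := `|x - y|.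

Definition dist_set {R : realType} {V : normedModType R} (f : V) (A : set V) : R :=
  inf [set dist f g | g in A].

Definition is_covering {R : realType} {V : normedModType R}
  (C : set V) (eps : R) (X : {fset V}) : Prop :=
  [set` X] `<=` C /\ forall x, C x -> exists2 y, y \in X & dist x y <= eps.

(* covering number N(C, d, eps): minimal size of a covering, +oo if none *)
Definition covering_number {R : realType} {V : normedModType R}
  (C : set V) (eps : R) : \bar R :=
  ereal_inf [set ((#|` X |)%fset%:R : R)%:E | X in [set X : {fset V} | is_covering C eps X]].

Definition entropy {R : realType} {V : normedModType R}
  (C : set V) (eps : R) : \bar R :=
  match covering_number C eps with
  | EFin r => if r == 0 then -oo%E else (ln r / ln 2)%:E
  | y => y
  end.

Definition entropy_bigO {R : realType} {V : normedModType R}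
  (C : set V) (gamma : R) : Prop :=
  exists K : R, exists2 delta : R, 0 < delta &
    forall eps : R, 0 < eps -> eps < delta ->
      (entropy C eps <= (K * eps `^ (- gamma^-1))%:E)%E.

Definition encoding_speed {R : realType} {V : normedModType R}
  (C : set V) : \bar R :=
  if `[< C = set0 >] then 0%E
  else ereal_sup [set g%:E | g in [set g : R | 0 < g /\ entropy_bigO C g]].

Definition Sigma {R : realType} {V : normedModType R}
  (phi : nat -> V) (pi : nat -> nat) (M : nat) : set V :=
  [set g | exists I : {fset nat},
     [/\ forall i, i \in I -> (1 <= i <= pi M)%N,
         (#|` I |%fset <= M)%N
       & exists c : nat -> R, g = \sum_(i <- I) c i *: phi i]].

Definition approx_class {R : realType} {V : normedModType R}
  (phi : nat -> V) (pi : nat -> nat) (alpha beta : R) : set V :=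
  [set f | `|f| <= beta /\
     forall M : nat, (1 <= M)%N -> (M%:R `^ alpha) * dist_set f (Sigma phi pi M) <= beta].

Definition poly_growth (pi : nat -> nat) : Prop :=
  exists C k : nat, forall n, (1 <= n)%N -> (pi n <= C * n ^ k)%N.

(* Fix M atoms among phi_1, ..., phi_(pi M): every f of the class lies within
   beta M^-alpha of their span.  After Gram-Schmidt orthonormalization the
   coefficients of a near-best approximation are bounded by about beta
   (Pythagoras), so rounding them to a grid of mesh eps / 4M yields an eps-net
   with (pi M + 1)^M (O(M / eps))^M points.  Taking M ~ eps^(-1/alpha) and using
   the polynomial growth of pi, the metric entropy is
   O(eps^(-1/alpha) log (1/eps)) = O(eps^(-1/g)) for every g < alpha. *)

From HB Require Import structures.
From mathcomp Require Import all_boot all_order all_algebra.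
From mathcomp Require Import finmap.
From mathcomp Require Import all_classical all_reals all_analysis.
From mathcomp Require Import ring lra.
Import Order.TTheory GRing.Theory Num.Theory.
Import numFieldNormedType.Exports.
Local Open Scope classical_set_scope.
Local Open Scope ring_scope.

Section InnerProduct.
Context {R : realType} {V : normedModType R}.
Variable ip : V -> V -> R.
Hypothesis ip_inner : is_inner_product ip.

Lemma ipC x y : ip x y = ip y x. Proof. by case: ip_inner. Qed.

Lemma ipZlD a x y z : ip (a *: x + y) z = a * ip x z + ip y z.
Proof. by case: ip_inner. Qed.

Lemma ip_norm x : `|x| ^+ 2 = ip x x. Proof. by case: ip_inner. Qed.

Lemma ip0l z : ip 0 z = 0.
Proof. by have := ipZlD 1 0 0 z; rewrite scaler0 addr0 mul1r; lra. Qed.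

Lemma ip0r z : ip z 0 = 0. Proof. by rewrite ipC ip0l. Qed.

Lemma ipZl a x z : ip (a *: x) z = a * ip x z.
Proof. by rewrite -[a *: x]addr0 ipZlD ip0l addr0. Qed.

Lemma ipBl x y z : ip (x - y) z = ip x z - ip y z.
Proof.
by have := ipZlD (-1) y x z; rewrite scaleN1r mulN1r addrC [RHS]addrC => <-.
Qed.

Lemma ip_sumZl (I : Type) (r : seq I) (a : I -> R) (x : I -> V) z :
  ip (\sum_(i <- r) a i *: x i) z = \sum_(i <- r) a i * ip (x i) z.
Proof.
by elim: r => [|i r IH]; rewrite ?big_nil ?ip0l // !big_cons ipZlD IH.
Qed.

Lemma ip_sumZr (I : Type) (r : seq I) (a : I -> R) (x : I -> V) z :
  ip z (\sum_(i <- r) a i *: x i) = \sum_(i <- r) a i * ip z (x i).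
Proof. by rewrite ipC ip_sumZl; apply: eq_bigr => i _; rewrite ipC. Qed.

(* Vectors are allowed to vanish, so that Gram-Schmidt applies to linearly
   dependent families without case distinctions. *)
Definition orthonormal_or0 (n : nat) (e : nat -> V) :=
  (forall j, e j = 0 \/ `|e j| = 1) /\
  (forall i j, (i < n)%N -> (j < n)%N -> i != j -> ip (e i) (e j) = 0).

Lemma ip_unit_or_zero e v : e = 0 \/ `|e| = 1 -> ip v e * ip e e = ip v e.
Proof.
by case=> [->|e1]; rewrite ?ip0r ?mul0r // -ip_norm e1 expr1n mulr1.
Qed.

Lemma orthonormal_proj n e v k : orthonormal_or0 n e -> (k < n)%N ->
  \sum_(j < n) ip v (e j) * ip (e j) (e k) = ip v (e k).
Proof.
move=> [e01 eo] kn; rewrite (bigD1 (Ordinal kn)) //= big1 ?addr0.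
  exact: ip_unit_or_zero.
by move=> j jk; rewrite eo ?mulr0.
Qed.

Lemma gram_schmidt n (w : nat -> V) : exists e : nat -> V, orthonormal_or0 n e /\
  forall c : nat -> R, exists a : nat -> R,
    \sum_(j < n) c j *: w j = \sum_(j < n) a j *: e j.
Proof.
elim: n => [|n [e [oe span_e]]].
  exists (fun=> 0); split; first by split=> [j|//]; left.
  by move=> c; exists (fun=> 0); rewrite !big_ord0.
pose u := w n - \sum_(j < n) ip (w n) (e j) *: e j.
pose en := if u == 0 then 0 else `|u|^-1 *: u.
have uE : u = `|u| *: en.
  rewrite /en; case: eqP => [->|/eqP u0]; first by rewrite scaler0.
  by rewrite scalerA divff ?scale1r ?normr_eq0.
have en01 : en = 0 \/ `|en| = 1.
  rewrite /en; case: eqP => [_|/eqP u0]; [by left|right].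
  by rewrite normrZ normrV ?unitfE ?normr_eq0 // normr_id mulVf ?normr_eq0.
have en_orth k : (k < n)%N -> ip en (e k) = 0.
  move=> kn; rewrite /en; case: eqP => _; first by rewrite ip0l.
  by rewrite ipZl ipBl ip_sumZl orthonormal_proj // subrr mulr0.
pose e' j := if j == n then en else e j.
exists e'; split.
  split=> [j|i j]; first by rewrite /e'; case: eqP => _ //; case: oe.
  rewrite !ltnS /e' => ilt jlt ij.
  case: eqP => [iE|/eqP iN]; case: eqP => [jE|/eqP jN].
  - by move: ij; rewrite iE jE eqxx.
  - by apply: en_orth; rewrite ltn_neqAle jN jlt.
  - by rewrite ipC; apply: en_orth; rewrite ltn_neqAle iN ilt.
  - by case: oe => _ ->; rewrite // ltn_neqAle ?iN ?jN.
move=> c; have [a ha] := span_e c.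
exists (fun j => if j == n then c n * `|u| else c n * ip (w n) (e j) + a j).
have wE : w n = `|u| *: en + \sum_(j < n) ip (w n) (e j) *: e j.
  by rewrite -uE /u subrK.
rewrite !big_ord_recr /= ha /e' eqxx [in c n *: w n]wE scalerDr scalerA.
rewrite scaler_sumr addrCA [RHS]addrC; congr (_ + _); rewrite -big_split /=.
by apply: eq_bigr => j _; rewrite (ltn_eqF (ltn_ord j)) scalerA -scalerDl addrC.
Qed.

Lemma pythagoras n e (a : nat -> R) : orthonormal_or0 n e ->
  `|\sum_(j < n) a j *: e j| ^+ 2 = \sum_(j < n) a j ^+ 2 * `|e j| ^+ 2.
Proof.
move=> [_ eo]; rewrite ip_norm ip_sumZl; apply: eq_bigr => i _.
rewrite ip_sumZr (bigD1 i) //= big1 ?addr0; first by rewrite ip_norm mulrA expr2.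
move=> j ji; rewrite eo ?mulr0 //.
by apply: contraNneq ji => ij; apply/eqP/val_inj.
Qed.

Lemma orthonormal_coef_bound n e (a : nat -> R) : orthonormal_or0 n e ->
  exists b : nat -> R, \sum_(j < n) a j *: e j = \sum_(j < n) b j *: e j /\
    forall j, `|b j| <= `|\sum_(j < n) a j *: e j|.
Proof.
move=> oe; exists (fun j => if (j < n)%N && (e j != 0) then a j else 0); split.
  apply: eq_bigr => j _; rewrite ltn_ord /=.
  by case: eqP => [->|//]; rewrite !scaler0.
move=> j; case: ifP => [/andP [jn ej]|_]; last by rewrite normr0 normr_ge0.
have e1 : `|e j| = 1 by case: oe => /(_ j) [ej0|//]; rewrite ej0 eqxx in ej.
have : a j ^+ 2 <= `|\sum_(j < n) a j *: e j| ^+ 2.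
  rewrite pythagoras // (bigD1 (Ordinal jn)) //= e1 expr1n mulr1 lerDl.
  by apply: sumr_ge0 => i _; rewrite mulr_ge0 // sqr_ge0.
by rewrite -real_normK ?num_real // ler_pXn2r ?nnegrE ?normr_ge0.
Qed.

End InnerProduct.

Arguments gram_schmidt {R V ip}.
Arguments orthonormal_coef_bound {R V ip} ip_inner {n e}.

Lemma grid_approx {R : realType} {V : normedModType R} {n N : nat}
    {e : nat -> V} {b : nat -> R} {r h : R} :
  (forall j, `|e j| <= 1) -> 0 < h -> r <= N%:R * h -> (forall j, `|b j| <= r) ->
  exists q : {ffun 'I_n -> 'I_(N.*2.+1)},
    `|\sum_(j < n) b j *: e j - \sum_(j < n) (h * ((q j)%:R - N%:R)) *: e j|
      <= n%:R * h.
Proof.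
move=> e1 h0 rN br.
(* round [b j] to the grid [h * (k - N)], [0 <= k <= 2N] *)
pose t j := Num.truncn (b j / h + N%:R).
have bh j : 0 <= b j / h + N%:R <= (N.*2)%:R.
  have := br j; rewrite ler_norml -muln2 natrM => /andP [lo hi].
  by apply/andP; split; rewrite -(ler_pM2r h0) ?mul0r mulrDl mulfVK ?gt_eqF //;
    lra.
have t_lt j : (t j < N.*2.+1)%N.
  have /andP [b0 b2] := bh j.
  by rewrite ltnS -(ler_nat R); apply: le_trans b2; have /andP [] := truncn_itv b0.
exists [ffun j : 'I_n => inord (t j)].
rewrite -sumrB (le_trans (ler_norm_sum _ _ _)) //.
have -> : n%:R * h = \sum_(j < n) h by rewrite sumr_const card_ord mulr_natl.
apply: ler_sum => j _; rewrite ffunE inordK // -scalerBl normrZ.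
rewrite -[X in _ <= X]mulr1 ler_pM ?normr_ge0 //.
have /andP [b0 _] := bh j; have /andP [t1 t2] := truncn_itv b0.
have -> : b j - h * ((t j)%:R - N%:R) = h * (b j / h + N%:R - (t j)%:R).
  by field; rewrite gt_eqF.
rewrite normrM gtr0_norm // ger0_norm ?subr_ge0 // ler_piMr ?ltW //.
by move: t2; rewrite -natr1; lra.
Qed.

Section Distance.
Context {R : realType} {V : normedModType R}.

Lemma dist_set_le {f g : V} {S : set V} : S g -> dist_set f S <= dist f g.
Proof.
by move=> Sg; apply: ge_inf; [exists 0 => _ [h _ <-]; exact: normr_ge0|exists g].
Qed.

Lemma dist_set_lt {f g0 : V} {S : set V} {d : R} : S g0 -> dist_set f S < d ->
  exists2 g, S g & dist f g < d.
Proof.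
move=> Sg0 fd; have hinf : has_inf [set dist f g | g in S].
  by split; [exists (dist f g0), g0|exists 0 => _ [h _ <-]; exact: normr_ge0].
have d_gt0 : 0 < d - dist_set f S by rewrite subr_gt0.
have [_ [g Sg <-]] := inf_adherent d_gt0 hinf.
by rewrite addrC subrK; exists g.
Qed.

Lemma covering_of_net {C : set V} {x0 : V} {D : finType} {Phi : D -> V} {eps : R} :
  C x0 -> (forall f, C f -> exists d, dist f (Phi d) <= eps / 2) ->
  exists X : {fset V}, is_covering C eps X /\ (#|` X| <= #|D|)%N.
Proof.
move=> Cx0 net.
pose near_net d := [set c | C c /\ dist c (Phi d) <= eps / 2].
pose psi d := xget x0 (near_net d).
have psi_near d : near_net d !=set0 -> near_net d (psi d).
  by move=> ne; have [] := xgetPex x0 ne.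
have psiC d : C (psi d).
  have [ne|empty] := pselect (near_net d !=set0); first by case: (psi_near d ne).
  by rewrite /psi xgetPN // => x nx; apply: empty; exists x.
exists [fset x in map psi (enum D)]%fset; split; last first.
  by rewrite card_fseq (leq_trans (size_undup _)) // size_map -cardE.
split=> [x /=|x Cx]; first by rewrite inE => /mapP [d _ ->].
have [d xd] := net x Cx.
have [_ psid] := psi_near d (ex_intro _ x (conj Cx xd)).
exists (psi d); first by rewrite inE map_f ?mem_enum.
rewrite /dist; apply: le_trans (ler_distD (Phi d) x (psi d)) _.
by move: xd psid; rewrite /dist (distrC (Phi d)); lra.
Qed.

Lemma entropy_le_covering {C : set V} {eps x : R} {X : {fset V}} :
  is_covering C eps X -> (#|` X|)%:R <= x ->
  (entropy C eps <= (ln x / ln 2)%:E)%E.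
Proof.
move=> cov Xx.
have N_le : (covering_number C eps <= (#|` X|)%:R%:E)%E.
  by apply: ereal_inf_lbound; exists X.
have N_ge0 : (0 <= covering_number C eps)%E.
  by apply: le_ereal_inf_tmp => _ [Y _ <-]; rewrite lee_fin ler0n.
rewrite /entropy; move: N_le N_ge0; case: (covering_number C eps) => [r| |] //.
rewrite !lee_fin => rX r0; case: eqP => [_|/eqP rn0]; first by rewrite leNye.
have r_gt0 : 0 < r by rewrite lt0r rn0.
have ln2 : 0 < ln (2 : R) by rewrite ln_gt0 ?ltr1n.
rewrite lee_fin ler_pM2r ?invr_gt0 //.
have x_gt0 : 0 < x by apply: lt_le_trans r_gt0 (le_trans rX Xx).
by rewrite ler_ln ?posrE // (le_trans rX).
Qed.

End Distance.

Section RealBounds.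
Context {R : realType}.

Lemma ln_le_powR {x t : R} : 0 < t -> 0 < x -> ln x <= x `^ t / t.
Proof.
move=> t_gt0 x_gt0; rewrite ler_pdivlMr // mulrC -ln_powR.
exact/ltW/ln_sublinear/powR_gt0.
Qed.

Lemma ln_affine_le_powR {a c t y : R} : 0 <= a -> 0 <= c -> 0 < t -> 1 <= y ->
  a + c * ln y <= (a + c / t) * y `^ t.
Proof.
move=> a_ge0 c_ge0 t_gt0 y_ge1.
have yt_ge1 : 1 <= y `^ t.
  by rewrite -(powRr0 y); apply: ler_powR => //; exact: ltW.
have := ler_wpM2l c_ge0 (ln_le_powR t_gt0 (lt_le_trans ltr01 y_ge1)).
have := ler_peMr a_ge0 yt_ge1.
lra.
Qed.

Lemma ln_succ_le_poly {m C n k : nat} : (m <= C * n ^ k)%N -> (0 < n)%N ->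
  ln (m.+1%:R : R) <= ln C.+1%:R + k%:R * ln (n%:R : R).
Proof.
move=> m_le n_gt0; rewrite [k%:R * _]mulr_natl -lnXn ?ltr0n // -lnM
  ?posrE ?exprn_gt0 ?ltr0n // ler_ln ?posrE ?mulr_gt0 ?exprn_gt0 ?ltr0n //.
by rewrite -natrX -natrM ler_nat mulSn -add1n leq_add ?expn_gt0 ?n_gt0.
Qed.

Lemma powRN_ge1 (e p : R) : 0 < e <= 1 -> 0 <= p -> 1 <= e `^ (- p).
Proof.
move=> /andP [e_gt0 e_le1] p_ge0; rewrite powRN invf_ge1 ?powR_gt0 //.
have := @ge0_ler_powR R p p_ge0 e 1; rewrite powR1; apply; rewrite ?nnegrE ?(ltW e_gt0) //.
Qed.

Lemma exists_natpow_gt {a b e : R} : 0 < a -> 0 <= b -> 0 < e <= 1 ->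
  exists M : nat, b < e * M.+1%:R `^ a /\
    M.+1%:R <= (b `^ a^-1 + 1) * e `^ (- a^-1).
Proof.
move=> a_gt0 b_ge0 e_bounds; have /andP [e_gt0 _] := e_bounds.
set y := e `^ (- a^-1).
have y_ge1 : 1 <= y by rewrite powRN_ge1 // invr_ge0 ltW.
set z := b `^ a^-1 * y.
have z_ge0 : 0 <= z by rewrite mulr_ge0 ?powR_ge0 // (le_trans ler01).
exists (Num.truncn z); split.
  have za : z `^ a = b / e.
    rewrite /z powRM ?powR_ge0 ?(le_trans ler01) // -!powRrM mulVf ?gt_eqF //.
    by rewrite mulNr mulVf ?gt_eqF // powRr1 // powR_inv1 // ltW.
  rewrite -ltr_pdivrMl // mulrC -za.
  by apply: gt0_ltr_powR; rewrite ?nnegrE ?ler0n ?truncnS_gt.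
have /andP [trunc_le _] := truncn_itv z_ge0.
by rewrite -natr1 mulrDl mul1r -/z; lra.
Qed.

End RealBounds.

Section ApproximationClass.
Context {R : realType} {F : normedModType R} {ip : F -> F -> R}.
Hypothesis ip_inner : is_inner_product ip.
Context {phi : nat -> F} { pi : nat -> nat } {alpha beta : R}.

Lemma Sigma0 M : Sigma phi pi M 0.
Proof.
exists fset0; split => //; exists (fun=> 0).
by rewrite big1 // => i _; rewrite scale0r.
Qed.

Lemma approx_class0 : 0 <= beta -> approx_class phi pi alpha beta 0.
Proof.
move=> beta_ge0; split=> [|M _]; first by rewrite normr0.
have := dist_set_le (f := 0) (Sigma0 M); rewrite /dist subrr normr0 => d0.
by rewrite (le_trans (ler_wpM2l (powR_ge0 _ _) d0)) ?mulr0.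
Qed.

Lemma Sigma_repr {M : nat} {g : F} : Sigma phi pi M.+1 g ->
  exists t : {ffun 'I_M.+1 -> 'I_(pi M.+1).+1}, exists c : nat -> R,
    g = \sum_(j < M.+1) c j *: phi (t (inord j)).
Proof.
case=> I [I_range I_card [c ->]].
exists [ffun k : 'I_M.+1 => inord (nth 0%N I k)].
exists (fun j => if (j < size I)%N then c (nth 0%N I j) else 0).
rewrite (big_nth 0%N) big_mkord.
rewrite (big_ord_widen M.+1 (fun j => c (nth 0%N I j) *: phi (nth 0%N I j))) //.
rewrite big_mkcond; apply: eq_bigr => j _.
case: ifP => jI; last by rewrite scale0r.
rewrite inord_val ffunE inordK //.
by have /I_range /andP [_] := mem_nth 0%N jI; rewrite ltnS.
Qed.

Lemma approx_class_net (M N : nat) (h delta : R) :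
  0 < h -> beta / M.+1%:R `^ alpha < delta -> beta + delta <= N%:R * h ->
  exists Phi : {ffun 'I_M.+1 -> 'I_(pi M.+1).+1} * {ffun 'I_M.+1 -> 'I_(N.*2.+1)} -> F,
  forall f, approx_class phi pi alpha beta f ->
    exists d, dist f (Phi d) <= delta + M.+1%:R * h.
Proof.
move=> h_gt0 M_delta N_delta.
have /choice [E E_gs] : forall t : {ffun 'I_M.+1 -> 'I_(pi M.+1).+1},
    exists e, orthonormal_or0 ip M.+1 e /\ forall c : nat -> R, exists a : nat -> R,
      \sum_(j < M.+1) c j *: phi (t (inord j)) = \sum_(j < M.+1) a j *: e j.
  by move=> t; exact: gram_schmidt ip_inner M.+1 (fun j => phi (t (inord j))).
exists (fun d : {ffun 'I_M.+1 -> 'I_(pi M.+1).+1} * {ffun 'I_M.+1 -> 'I_(N.*2.+1)} =>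
  \sum_(j < M.+1) (h * ((d.2 j)%:R - N%:R)) *: E d.1 j).
move=> f [f_le f_approx].
have [g Sg fg] : exists2 g, Sigma phi pi M.+1 g & dist f g < delta.
  apply: dist_set_lt (Sigma0 _) (le_lt_trans _ M_delta).
  by rewrite ler_pdivlMr ?powR_gt0 ?ltr0n // mulrC f_approx.
have [t [c gE]] := Sigma_repr Sg.
have [[E01 _] /(_ c) [a ha]] := E_gs t.
have [b [ab b_le]] := orthonormal_coef_bound ip_inner a (proj1 (E_gs t)).
have g_le : `|g| <= beta + delta.
  by have := ler_normD (g - f) f; rewrite subrK distrC; move: fg; rewrite /dist; lra.
have E_le j : `|E t j| <= 1 by case: (E01 j) => ->; rewrite ?normr0.
have b_bound j : `|b j| <= beta + delta by rewrite (le_trans (b_le j)) -?ha -?gE.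
have [q gq] := grid_approx (n := M.+1) E_le h_gt0 N_delta b_bound.
exists (t, q); rewrite /dist /=; apply: le_trans (ler_distD g f _) _.
by move: gq fg; rewrite /dist gE ha ab; lra.
Qed.

Lemma approx_class_entropy_le (eps : R) (M : nat) :
  0 < beta -> 0 < eps <= 1 -> 4 * beta < eps * M.+1%:R `^ alpha ->
  (entropy (approx_class phi pi alpha beta) eps <=
    (M.+1%:R * ln ((pi M.+1).+1%:R * ((8 * beta + 5) * M.+1%:R / eps)) / ln 2)%:E)%E.
Proof.
move=> beta_gt0 /andP [eps_gt0 eps_le1] M_large.
have m_gt0 : 0 < M.+1%:R :> R by rewrite ltr0n.
pose h := eps / (4 * M.+1%:R).
have h_gt0 : 0 < h by rewrite divr_gt0 ?mulr_gt0.
pose N := (Num.truncn ((beta + eps / 4) / h)).+1.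
have N_large : beta + eps / 4 <= N%:R * h.
  by rewrite -ler_pdivrMr // ltW // truncnS_gt.
have M_delta : beta / M.+1%:R `^ alpha < eps / 4.
  by rewrite ltr_pdivrMr ?powR_gt0 // mulrAC ltr_pdivlMr // mulrC.
have [Phi net] := @approx_class_net M N h (eps / 4) h_gt0 M_delta N_large.
have net_half f : approx_class phi pi alpha beta f ->
    exists d, dist f (Phi d) <= eps / 2.
  have -> : eps / 2 = eps / 4 + M.+1%:R * h by rewrite /h; field; rewrite gt_eqF.
  exact: net.
have [X [cov X_card]] := covering_of_net (approx_class0 (ltW beta_gt0)) net_half.
pose q := M.+1%:R / eps.
have q_ge1 : 1 <= q.
  by rewrite /q ler_pdivlMr // mul1r (le_trans eps_le1) // ler1n.
have m_le_q : M.+1%:R <= q.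
  by rewrite /q ler_pdivlMr //; exact: ler_piMr (ltW m_gt0) eps_le1.
have N_le : (N.*2.+1)%:R <= (8 * beta + 5) * q.
  have x_ge0 : 0 <= (beta + eps / 4) / h by apply: divr_ge0; [lra|exact: ltW].
  have /andP [trunc_le _] := truncn_itv x_ge0.
  have xE : (beta + eps / 4) / h = 4 * beta * q + M.+1%:R.
    by rewrite /h /q; field; rewrite !gt_eqF.
  rewrite xE in trunc_le; rewrite -addn1 -muln2 natrD natrM /N -natr1 xE; nra.
have card_le : (#|` X|)%:R <= ((pi M.+1).+1%:R * (N.*2.+1)%:R) ^+ M.+1 :> R.
  rewrite -natrM -natrX ler_nat (leq_trans X_card) //.
  by rewrite card_prod !card_ffun !card_ord expnMn.
have Q_gt0 : 0 < (8 * beta + 5) * M.+1%:R / eps.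
  by rewrite divr_gt0 // mulr_gt0 //; lra.
have pow_le : ((pi M.+1).+1%:R * (N.*2.+1)%:R) ^+ M.+1 <=
    ((pi M.+1).+1%:R * ((8 * beta + 5) * M.+1%:R / eps)) ^+ M.+1 :> R.
  apply: lerXn2r.
  - by rewrite nnegrE mulr_ge0.
  - by rewrite nnegrE mulr_ge0 // ltW.
  apply: ler_wpM2l => //; rewrite -mulrA; exact: N_le.
apply: le_trans (entropy_le_covering cov (le_trans card_le pow_le)) _.
rewrite lnXn; last by rewrite mulr_gt0.
by rewrite [M.+1%:R * _]mulr_natl.
Qed.

Lemma approx_class_entropy_bigO (g : R) :
  poly_growth pi -> 0 < alpha -> 0 < beta -> 0 < g < alpha ->
  entropy_bigO (approx_class phi pi alpha beta) g.
Proof.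
move=> [Cp [kp pi_le]] alpha_gt0 beta_gt0 /andP [g_gt0 g_lt].
pose A := (4 * beta) `^ alpha^-1 + 1.
pose th := alpha / g - 1.
pose K0 := (Cp.+1)%:R * (8 * beta + 5) * A ^+ kp.+1.
pose c := (kp.+1)%:R + alpha.
exists (A * (ln K0 + c / th) / ln 2), 1 => // eps eps_gt0 eps_lt1.
have eps_bounds : 0 < eps <= 1 by rewrite eps_gt0 ltW.
have th_gt0 : 0 < th by rewrite subr_gt0 ltr_pdivlMr // mul1r.
have A_ge1 : 1 <= A by rewrite lerDr powR_ge0.
have A_gt0 : 0 < A by rewrite (lt_le_trans ltr01).
have [M [M_large M_le]] := exists_natpow_gt alpha_gt0
  (mulr_ge0 (ler0n _ 4) (ltW beta_gt0)) eps_bounds.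
have m_gt0 : 0 < M.+1%:R :> R by rewrite ltr0n.
set y := eps `^ (- alpha^-1) in M_le.
have y_ge1 : 1 <= y by rewrite powRN_ge1 // invr_ge0 ltW.
have y_gt0 : 0 < y by rewrite (lt_le_trans ltr01).
have eps_g : eps `^ (- g^-1) = y * y `^ th.
  rewrite mulr_powRB1 ?divr_gt0 ?ltW // /y -powRrM.
  by congr powR; field; rewrite !gt_eqF.
have ln_eps : ln eps^-1 = alpha * ln y.
  by rewrite /y -ln_powR -powRrM mulNr mulVf ?gt_eqF // powR_inv1 // ltW.
pose Q := (pi M.+1).+1%:R * ((8 * beta + 5) * M.+1%:R / eps).
have lnQ : ln Q = ln (pi M.+1).+1%:R + ln (8 * beta + 5) + ln M.+1%:R + alpha * ln y.
  rewrite -ln_eps /Q -!lnM ?posrE ?mulr_gt0 ?divr_gt0 ?invr_gt0 ?ltr0n //; try lra.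
  by rewrite !mulrA.
have ln_pi : ln (pi M.+1).+1%:R <= ln Cp.+1%:R + kp%:R * ln (M.+1%:R : R).
  exact: ln_succ_le_poly (pi_le _ (ltn0Sn M)) (ltn0Sn M).
have ln_m : ln M.+1%:R <= ln A + ln y.
  by rewrite -lnM ?posrE // ler_ln ?posrE ?mulr_gt0.
have ln_K0 : ln K0 = ln Cp.+1%:R + ln (8 * beta + 5) + kp.+1%:R * ln A.
  rewrite /K0 [kp.+1%:R * _]mulr_natl -lnXn //.
  by rewrite -!lnM ?posrE ?mulr_gt0 ?exprn_gt0 ?ltr0n //; lra.
have lnQ_le : ln Q <= ln K0 + c * ln y.
  have := ler_wpM2l (ler0n R kp) ln_m.
  have kpS : kp.+1%:R = kp%:R + 1 :> R by rewrite natr1.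
  by rewrite lnQ ln_K0 /c kpS; lra.
have lnK0_ge0 : 0 <= ln K0.
  by rewrite ln_ge0 // !mulr_ege1 ?exprn_ege1 ?ler1n //; lra.
have lnQ_ge0 : 0 <= ln Q.
  have m_ge1 : 1 <= M.+1%:R :> R by rewrite ler1n.
  by rewrite ln_ge0 // mulr_ege1 ?ler1n // ler_pdivlMr // mul1r; nra.
apply: le_trans (approx_class_entropy_le eps M beta_gt0 eps_bounds M_large) _.
rewrite lee_fin [X in _ <= X]mulrAC ler_pM2r ?invr_gt0 ?ln_gt0 ?ltr1n // eps_g.
have -> : A * (ln K0 + c / th) * (y * y `^ th) = A * y * ((ln K0 + c / th) * y `^ th).
  by ring.
apply: ler_pM; [exact: ltW | exact: lnQ_ge0 | exact: M_le |].
have c_ge0 : 0 <= c by rewrite addr_ge0 ?ltW.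
exact: le_trans lnQ_le (ln_affine_le_powR lnK0_ge0 c_ge0 th_gt0 y_ge1).
Qed.

End ApproximationClass.

Lemma encoding_speed_ge {R : realType} {V : normedModType R} {C : set V} {alpha : R} :
  C !=set0 -> 0 < alpha -> (forall g : R, 0 < g < alpha -> entropy_bigO C g) ->
  (alpha%:E <= encoding_speed C)%E.
Proof.
move=> C_ne alpha_gt0 bigO; rewrite /encoding_speed.
case: asboolP => [C0|_]; first by move: C_ne; rewrite C0 => -[].
apply/lee_subgt0Pr => e e_gt0; rewrite -EFinB.
pose g := Num.max (alpha - e) (alpha / 2).
have g_bounds : 0 < g < alpha.
  by rewrite lt_max gt_max; apply/andP; split; [apply/orP; right | apply/andP]; lra.
apply: (@le_trans _ _ g%:E); first by rewrite lee_fin le_max lexx.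
apply: ereal_sup_ubound; exists g => //; split; [by case/andP: g_bounds|].
exact: bigO.
Qed.

Theorem mainTheorem16 (R : realType) (F : completeNormedModType R)
  (ip : F -> F -> R) (Hip : is_inner_product ip)
  (phi : nat -> F) (pi : nat -> nat) (Hpi : poly_growth pi)
  (alpha beta : R) (Halpha : 0 < alpha) (Hbeta : 0 < beta) :
  (alpha%:E <= encoding_speed (approx_class phi pi alpha beta))%E.
Proof.
apply: (encoding_speed_ge _ Halpha) => [|g g_bounds].
  by exists 0; exact: approx_class0 (ltW Hbeta).
exact: (approx_class_entropy_bigO Hip g Hpi Halpha Hbeta g_bounds).
Qed.
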